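(* Let $n>5$ be prime and let $\gamma:\mathbb{Z}_n\to[0,1]$ be a probability distribution with $\gamma(k)\in\mathbb{Q}$ for all $k\in\mathbb{Z}_n$. If the random walk on $\mathbb{Z}_n$ with step distribution $\gamma$ is reconstructive, then the Fourier coefficients $\{\hat{\gamma}(x)\}_{x\in\mathbb{Z}_n}$ are pairwise distinct.
   Context: $\mathbb{Z}_n=\mathbb{Z}/n\mathbb{Z}$. The random walk $v(t)$ with step distribution $\gamma$ on a finite abelian group $H$ has $v(1)$ uniform on $H$ and $\mathbb{P}(v(t+1)-v(t)=k)=\gamma(k)$, steps independent. A labeling (scenery) is a function $f:H\to\{0,1\}$. The walk is called reconstructive if, for any two labelings $f_1,f_2$, the distributions of the sequences $\{f_1(v(t))\}_{t\ge1}$ and $\{f_2(v(t))\}_{t\ge1}$ coincide only if $f_1$ is a shift of $f_2$, i.e. there is $\ell\in H$ with $f_1(k)=f_2(k+\ell)$ for all $k$. The Fourier transform is $\hat{\gamma}(x)=\sum_{k\in\mathbb{Z}_n}\omega_n^{kx}\gamma(k)$ with $\omega_n=e^{-2\pi i/n}$. *)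

From HB Require Import structures.
From mathcomp Require Import all_boot all_order all_algebra.
From mathcomp Require Import all_classical all_reals.
From mathcomp Require Import trigo.
From mathcomp Require Import complex.

Set Implicit Arguments.
Unset Strict Implicit.
Unset Printing Implicit Defensive.

Import Order.TTheory GRing.Theory Num.Theory.
Local Open Scope ring_scope.

Section Walk.
Variables (R : realType) (H : finZmodType).

(* Probability of a given trajectory (v(1), ..., v(m)) of the random walk:
   v(1) uniform on H, increments v(t+1)-v(t) distributed according to gamma,
   independently. *)
Fixpoint chain_prob (gamma : H -> R) (x : H) (s : seq H) : R :=
  match s with
  | [::] => 1
  | y :: s' => gamma (y - x) * chain_prob gamma y s'
  end.

Definition path_prob (gamma : H -> R) (p : seq H) : R :=
  match p with
  | [::] => 1
  | x :: s => #|H|%:R^-1 * chain_prob gamma x s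
  end.

(* P( f(v(1)) = w_1, ..., f(v(m)) = w_m ) for a word w of length m. *)
Definition obs_prob (gamma : H -> R) (f : H -> bool) (w : seq bool) : R :=
  \sum_(p : (size w).-tuple H | map f p == w) path_prob gamma p.

(* The laws of the (infinite) observed sequences {f(v(t))}_{t>=1} coincide;
   a law on {0,1}^N is determined by its finite-dimensional marginals
   (cylinder sets), so we quantify over all finite words. *)
Definition same_scenery_law (gamma : H -> R) (f1 f2 : H -> bool) : Prop :=
  forall w : seq bool, obs_prob gamma f1 w = obs_prob gamma f2 w.

Definition is_shift (f1 f2 : H -> bool) : Prop :=
  exists l : H, forall k : H, f1 k = f2 (k + l).

Definition reconstructive (gamma : H -> R) : Prop :=
  forall f1 f2 : H -> bool, same_scenery_law gamma f1 f2 -> is_shift f1 f2.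

Definition is_prob_distr (gamma : H -> R) : Prop :=
  (forall k, 0 <= gamma k <= 1) /\ \sum_(k : H) gamma k = 1.

End Walk.

Local Open Scope complex_scope.

Definition omega (R : realType) (n : nat) : R[i] :=
  (cos (2 * pi / n%:R)) -i* (sin (2 * pi / n%:R)).

Definition fourier (R : realType) (n : nat) (gamma : 'Z_n -> R) (x : 'Z_n)
  : R[i] :=
  \sum_(k : 'Z_n) (omega R n) ^+ (k * x)%N * (gamma k)%:C.

From HB Require Import structures.
From mathcomp Require Import all_boot all_order all_algebra.
From mathcomp Require Import all_classical all_reals.
From mathcomp Require Import trigo.
From mathcomp Require Import complex.
From mathcomp Require Import all_field.
From mathcomp Require Import ring.
Import Order.TTheory GRing.Theory Num.Theory.
Local Open Scope ring_scope.
Set Implicit Arguments. Unset Strict Implicit. Unset Printing Implicit Defensive.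

(** Write [fourier gamma x] as [\sum_j A_x(j) omega^j], where [A_x(j)] (the
  [fiber_mass]) is the gamma-mass of [{k | k x = j}].  For prime [n] the polynomial
  [1 + X + ... + X^(n-1)] is irreducible over [rat], so a rational relation among
  [1, omega, ..., omega^(n-1)] has constant coefficients; hence equal Fourier
  coefficients at [x != y] force [A_x = A_y], i.e. gamma is invariant under
  multiplication by some unit [m != 1].  This dilation is a group automorphism
  preserving the law of the walk, so a scenery [f] and [f \o ( *%R m)] are
  indistinguishable; but the indicator of [{0, 1}] (for [m != -1]) or of
  [{0, 1, 3}] (for [m = -1], which needs [n > 5]) is not a shift of its
  dilate, contradicting reconstructivity. *)

Lemma sum_expr_unity_root (R : idomainType) n (w : R) :
  w ^+ n = 1 -> w != 1 -> \sum_(i < n) w ^+ i = 0.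
Proof.
move=> wn w1; apply/eqP; have /eqP := subrX1 w n.
by rewrite wn subrr eq_sym mulf_eq0 subr_eq0 (negPf w1).
Qed.

Section PolyRoot.
Variables (F K : fieldType) (f : {rmorphism F -> K}).

Lemma irredp_root_dvdp (p q : {poly F}) (x : K) : irreducible_poly p ->
  root (map_poly f p) x -> root (map_poly f q) x -> p %| q.
Proof.
move=> p_irr px qx; set g := gcdp p q.
have gx : root (map_poly f g) x by rewrite gcdp_map root_gcd px.
have g_gt1 : (1 < size g)%N.
  rewrite -(size_map_poly f) (root_size_gt1 _ gx) // map_poly_eq0.
  by rewrite gcdp_eq0 negb_and irredp_neq0.
have /(eqp_dvdl q) <- : g %= p.
  by apply: p_irr (dvdp_gcdl p q); rewrite neq_ltn g_gt1 orbT.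
exact: dvdp_gcdr.
Qed.

Lemma min_root_irredp (p : {poly F}) (x : K) : p \is monic ->
  (forall q, root (map_poly f q) x = (p %| q)) -> irreducible_poly p.
Proof.
move=> p_monic p_min; have p0 := monic_neq0 p_monic.
split=> [|d d_size d_dvd].
  by rewrite ltn_neqAle eq_sym -dvdp1 -p_min rmorph1 root1 lt0n size_poly_eq0.
have [e De] := dvdpP _ _ d_dvd.
have d0 : d != 0 by apply: contraNneq p0 => d0; rewrite De d0 mulr0.
have e0 : e != 0 by apply: contraNneq p0 => e0; rewrite De e0 mul0r.
have : root (map_poly f p) x by rewrite p_min.
rewrite De rmorphM rootM !p_min => /orP[/(dvdp_leq e0) | pd].
  rewrite De size_mul // -subn1 -addnBA ?lt0n ?size_poly_eq0 //.
  rewrite -{2}[size e]addn0 leq_add2l leqNgt subn_gt0 -ltnNge => d_lt2.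
  by move: d_size; rewrite eqn_leq -ltnS d_lt2 lt0n size_poly_eq0 d0.
by rewrite -De /eqp d_dvd pd.
Qed.

End PolyRoot.

Lemma horner_map_poly (R S : nzRingType) (f : {rmorphism R -> S}) n (E : nat -> R) x :
  (map_poly f (\poly_(i < n) E i)).[x] = \sum_(i < n) f (E i) * x ^+ i.
Proof.
rewrite -(horner_poly n (fun i => f (E i))); congr horner; apply/polyP=> i.
by rewrite coef_map /= !coef_poly; case: ltnP; rewrite ?rmorph0.
Qed.

Lemma root_poly_unity_root (F : numFieldType) n (w : F) :
  w ^+ n = 1 -> w != 1 -> root (map_poly ratr (\poly_(i < n) 1 : {poly rat})) w.
Proof.
move=> wn w1; rewrite /root horner_map_poly.
by under eq_bigr do rewrite rmorph1 mul1r; rewrite sum_expr_unity_root.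
Qed.

Lemma cyclotomic_prime_irredp n :
  prime n -> irreducible_poly (\poly_(i < n) 1 : {poly rat}).
Proof.
move=> n_prime; have n_gt0 := prime_gt0 n_prime.
set Q := \poly_(i < n) 1.
have Q_size : size Q = n by rewrite size_poly_eq // oner_eq0.
have [z z_prim] := C_prim_root_exists n_gt0.
have [p [Dp p_monic] p_min] := minCpolyP z.
have p_irr := min_root_irredp p_monic p_min.
have p_size : size p = n.
  have := congr1 (size \o polyseq) (minCpoly_cyclotomic z_prim).
  by rewrite /= Dp size_map_poly size_cyclotomic totient_prime // prednK.
have pQ : p %= Q.
  rewrite -dvdp_size_eqp ?Q_size ?p_size // -p_min.
  rewrite root_poly_unity_root ?(prim_expr_order z_prim) //.
  by rewrite -[z]expr1 -(prim_order_dvd z_prim) dvdn1 gtn_eqF ?prime_gt1.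
split=> [|d d_size d_dvd]; first by rewrite Q_size prime_gt1.
rewrite -(eqp_dvdr _ pQ) in d_dvd; exact: eqp_trans (p_irr d d_size d_dvd) pQ.
Qed.

Lemma rat_relation_unity_root (F : numFieldType) n (w : F) (c : nat -> rat) :
  prime n -> w ^+ n = 1 -> w != 1 ->
  \sum_(i < n) ratr (c i) * w ^+ i = 0 -> forall i, (i < n)%N -> c i = c 0%N.
Proof.
move=> n_prime wn w1 c_rel.
set Q := \poly_(i < n) 1 : {poly rat}; set P := \poly_(i < n) c i.
have Q_size : size Q = n by rewrite size_poly_eq // oner_eq0.
have Q_root : root (map_poly ratr Q) w by apply: root_poly_unity_root.
have P_root : root (map_poly ratr P) w by rewrite /root horner_map_poly c_rel.
have [a Da] : exists a, P = a * Q.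
  apply/dvdpP.
  exact: irredp_root_dvdp (cyclotomic_prime_irredp n_prime) Q_root P_root.
have a_size : (size a <= 1)%N.
  have [-> | a0] := eqVneq a 0; first by rewrite size_poly0.
  have Q0 : Q != 0 by rewrite -size_poly_eq0 Q_size -lt0n prime_gt0.
  have := size_poly n c; rewrite -/P Da size_mul // Q_size.
  by case: (size a) => [|k] //=; rewrite -{2}(add0n n) leq_add2r.
have cE i : (i < n)%N -> c i = a`_0.
  move=> i_lt; have := congr1 (fun p : {poly rat} => p`_i) Da.
  by rewrite /= (size1_polyC a_size) coefCM coefC !coef_poly i_lt mulr1.
by move=> i i_lt; rewrite !cE ?prime_gt0.
Qed.

Section Omega.
Variable R : realType.
Local Open Scope complex_scope.

Lemma omega_exp n k : omega R n ^+ k =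
  cos (k%:R * (2 * pi / n%:R)) -i* sin (k%:R * (2 * pi / n%:R)).
Proof.
set t := 2 * pi / n%:R.
elim: k => [|k IHk]; first by rewrite expr0 !mul0r cos0 sin0 oppr0.
rewrite exprSr IHk /omega -/t -natr1 mulrDl mul1r cosD sinD.
by rewrite -[(_ +i* _) * (_ +i* _)]/(_ +i* _); congr Complex; ring.
Qed.

Lemma omega_order n : (0 < n)%N -> omega R n ^+ n = 1.
Proof.
move=> n_gt0; rewrite omega_exp mulrCA mulfV ?pnatr_eq0 -?lt0n // mulr1.
by rewrite mulr_natl cos2pi sin2pi oppr0.
Qed.

Lemma omega_neq1 n : (2 < n)%N -> omega R n != 1.
Proof.
move=> n_gt2; apply/eqP => /(congr1 (@complex.Im R)) /= /eqP.
have n_pos : (0 : R) < n%:R by rewrite ltr0n (leq_trans _ n_gt2).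
rewrite oppr_eq0 gt_eqF // sin_gt0_pi // divr_gt0 ?mulr_gt0 ?pi_gt0 //=.
by rewrite ltr_pdivrMr // [X in _ < X]mulrC ltr_pM2r ?pi_gt0 // ltr_nat.
Qed.

End Omega.

Lemma Zp_nat_eq0 p i : ((i%:R : 'Z_p.+2) == 0) = (p.+2 %| i)%N.
Proof. by rewrite Zp_nat -val_eqE /= /dvdn. Qed.

Lemma Zp_prime_unit p (x : 'Z_p.+2) : prime p.+2 -> x != 0 -> x \is a GRing.unit.
Proof.
move=> p_prime x0; rewrite -(natr_Zp x) unitZpE // prime_coprime //.
by rewrite -Zp_nat_eq0 natr_Zp.
Qed.

Lemma Zp_oppr1_neq1 p : (2 < p.+2)%N -> (-1 : 'Z_p.+2) != 1.
Proof.
move=> p_gt2; rewrite eq_sym -subr_eq0 opprK -[1 + 1]/(2%:R) Zp_nat_eq0.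
by rewrite gtnNdvd.
Qed.

Definition fiber_mass p (q : 'Z_p.+2 -> rat) (x j : 'Z_p.+2) : rat :=
  \sum_(k | k * x == j) q k.

Section FiberMass.
Variables (p : nat) (q : 'Z_p.+2 -> rat).

Lemma sum_fiber_mass x : \sum_j fiber_mass q x j = \sum_k q k.
Proof. by rewrite [RHS](partition_big (fun k => k * x) predT). Qed.

Lemma fiber_mass_unit x j : x \is a GRing.unit -> fiber_mass q x j = q (j / x).
Proof.
move=> x_unit; rewrite /fiber_mass (big_pred1 (j / x)) // => k /=.
by rewrite (can2_eq (mulrK x_unit) (divrK x_unit)).
Qed.

Lemma fiber_mass0 j : fiber_mass q 0 j = if j == 0 then \sum_k q k else 0.
Proof.
rewrite /fiber_mass; case: eqP => [-> | /eqP j0].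
  by apply: eq_bigl => k; rewrite mulr0 eqxx.
by rewrite big_pred0 // => k; rewrite mulr0 eq_sym (negPf j0).
Qed.

Lemma fourier_fiber_massE (R : realType) x :
  fourier (fun k => ratr (q k) : R) x =
  \sum_j ratr (fiber_mass q x j) * omega R p.+2 ^+ j.
Proof.
have omega_mod (k : 'Z_p.+2) :
    omega R p.+2 ^+ (k * x)%N = omega R p.+2 ^+ (k * x)%R.
  by rewrite -(expr_mod _ (omega_order R (ltn0Sn p.+1))).
rewrite /fourier (partition_big (fun k => k * x) predT) //=.
apply: eq_bigr => j _; rewrite rmorph_sum mulr_suml.
by apply: eq_bigr => k /eqP <-; rewrite omega_mod mulrC (fmorph_rat (real_complex R)).
Qed.

Lemma fourier_eq_fiber_mass (R : realType) x y : prime p.+2 -> (2 < p.+2)%N ->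
  fourier (fun k => ratr (q k) : R) x = fourier (fun k => ratr (q k) : R) y ->
  fiber_mass q x =1 fiber_mass q y.
Proof.
move=> p_prime p_gt2; rewrite !fourier_fiber_massE => /eqP.
rewrite -subr_eq0 -sumrB => /eqP rel.
pose c i := fiber_mass q x (inord i) - fiber_mass q y (inord i).
have c_rel : \sum_(i < p.+2) ratr (c i) * omega R p.+2 ^+ i = 0.
  by rewrite -[RHS]rel; apply: eq_bigr => j _; rewrite /c inord_val rmorphB mulrBl.
have c_const := rat_relation_unity_root p_prime (omega_order R (ltn0Sn _))
  (omega_neq1 R p_gt2) c_rel.
have c0 : c 0%N = 0.
  have : \sum_(j < p.+2) c j = 0.
    rewrite sumrB; under eq_bigr do rewrite inord_val.
    by under [X in _ - X]eq_bigr do rewrite inord_val; rewrite !sum_fiber_mass subrr.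
  rewrite (eq_bigr (fun _ => c 0%N)) => [|j _]; last by rewrite c_const.
  by rewrite sumr_const card_ord => /eqP; rewrite mulrn_eq0 => /eqP.
move=> j; apply/eqP; rewrite -subr_eq0.
by have := c_const j (ltn_ord j); rewrite c0 /c inord_val => ->.
Qed.

Lemma fiber_mass_eq_dilation x y : prime p.+2 -> (2 < p.+2)%N -> x != y ->
  fiber_mass q x =1 fiber_mass q y ->
  exists m, [/\ m \is a GRing.unit, m != 1 & forall k, q (m * k) = q k].
Proof.
move=> p_prime p_gt2.
wlog x0 : x y / x != 0 => [sym|].
  have [-> | x0] := eqVneq x 0; last exact: sym.
  by move=> yx fxy; apply: (sym y 0); rewrite 1?eq_sym // => j; rewrite fxy.
move=> xy fxy; have x_unit := Zp_prime_unit p_prime x0.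
have [y0 | y0] := eqVneq y 0.
  have qE k : q k = if k == 0 then \sum_i q i else 0.
    have := fxy (k * x); rewrite fiber_mass_unit // mulrK // y0 fiber_mass0.
    by rewrite mulIr_eq0 //; apply: mulIr.
  exists (-1); split; [exact: unitrN1 | exact: Zp_oppr1_neq1 |].
  by move=> k; rewrite !qE mulN1r oppr_eq0.
have y_unit := Zp_prime_unit p_prime y0.
exists (y / x); split.
- by rewrite unitrM y_unit unitrV x_unit.
- by apply: contraNneq xy => /(canRL (divrK x_unit)); rewrite mul1r => ->.
- move=> k; have := fxy (k * y); rewrite !fiber_mass_unit // mulrK // => <-.
  by rewrite mulrC mulrA.
Qed.

End FiberMass.

Section Automorphism.
Variables (R : realType) (H : finZmodType) (gamma : H -> R) (phi : H -> H).
Hypotheses (phi_inj : injective phi) (phiB : {morph phi : a b / a - b}).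
Hypothesis gamma_phi : forall k, gamma (phi k) = gamma k.

Lemma chain_prob_map x s : chain_prob gamma (phi x) (map phi s) = chain_prob gamma x s.
Proof. by elim: s x => [|y s IHs] x //=; rewrite IHs -phiB gamma_phi. Qed.

Lemma path_prob_map s : path_prob gamma (map phi s) = path_prob gamma s.
Proof. by case: s => [|x s] //=; rewrite chain_prob_map. Qed.

Lemma same_scenery_law_comp f : same_scenery_law gamma (fun k => f (phi k)) f.
Proof.
move=> w; rewrite /obs_prob [RHS](reindex_inj (h := map_tuple phi)).
  apply: eq_big => [t | t _].
  - by rewrite map_comp.
  - exact/esym/path_prob_map.
by move=> t1 t2 /(congr1 val) /(inj_map phi_inj) /val_inj.
Qed.

End Automorphism.

Section Sceneries.
Variable p : nat.
Implicit Types (m a b : 'Z_p.+2).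

Lemma Zp_sub_nat_neq a b i : (0 < i < p.+2)%N -> b - a = i%:R -> a <> b.
Proof.
move=> /andP[i0 ip] ba ab; move: ba; rewrite ab subrr => /esym/eqP.
by rewrite Zp_nat_eq0 gtnNdvd.
Qed.

Lemma not_shift_dilation_pair m : m \is a GRing.unit -> m != 1 -> m != -1 ->
  ~ is_shift (fun k => m * k \in [:: 0; 1]) (fun k => k \in [:: 0; 1]).
Proof.
move=> m_unit m1 mN1 [l hl].
have m0 : m != 0 by apply: contraTneq m_unit => ->; rewrite unitr0.
have := hl 0; rewrite mulr0 add0r !mem_seq2 eqxx /= => /esym/orP[]/eqP l0.
  have := hl m^-1; rewrite !mem_seq2 mulrV // l0 addr0 eqxx orbT.
  by rewrite invr_eq0 invr_eq1 (negPf m0) (negPf m1).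
have := hl (-1); rewrite !mem_seq2 l0 addNr eqxx /= mulrN1.
by rewrite oppr_eq0 eqr_oppLR (negPf m0) (negPf mN1).
Qed.

Lemma not_shift_reflection_triple : (5 < p.+2)%N ->
  ~ is_shift (fun k : 'Z_p.+2 => - k \in [:: 0; 1; 3%:R])
             (fun k => k \in [:: 0; 1; 3%:R]).
Proof.
move=> p_gt5 [l hl].
have neq i (a b : 'Z_p.+2) : (0 < i <= 5)%N -> b - a = i%:R -> a <> b.
  by move=> /andP[i0 i5]; apply: Zp_sub_nat_neq; rewrite i0 (leq_ltn_trans i5).
have := hl 0; rewrite oppr0 add0r !mem_seq3 eqxx /= => /esym/or3P[]/eqP l0.
- have := hl 1; rewrite !mem_seq3 l0 addr0 eqxx orbT => /or3P[]/eqP h.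
  + by apply: (neq 1%N _ _ isT _ h); ring.
  + by apply: (neq 2%N _ _ isT _ h); ring.
  + by apply: (neq 4%N _ _ isT _ h); ring.
- have := hl 2%:R; rewrite !mem_seq3 l0 (_ : 2%:R + 1 = 3%:R :> 'Z_p.+2); last by ring.
  rewrite eqxx !orbT => /or3P[]/eqP h.
  + by apply: (neq 2%N _ _ isT _ h); ring.
  + by apply: (neq 3%N _ _ isT _ h); ring.
  + by apply: (neq 5%N _ _ isT _ h); ring.
- have := hl (- 2%:R); rewrite !mem_seq3 l0.
  rewrite (_ : - 2%:R + 3%:R = 1 :> 'Z_p.+2); last by ring.
  rewrite eqxx orbT opprK => /or3P[]/eqP h.
  + by apply: (neq 2%N _ _ isT _ (esym h)); ring.
  + by apply: (neq 1%N _ _ isT _ (esym h)); ring.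
  + by apply: (neq 1%N _ _ isT _ h); ring.
Qed.

Lemma exists_scenery_not_shift_dilation m : (5 < p.+2)%N ->
  m \is a GRing.unit -> m != 1 ->
  exists f : 'Z_p.+2 -> bool, ~ is_shift (fun k => f (m * k)) f.
Proof.
move=> p_gt5 m_unit m1; have [-> | mN1] := eqVneq m (-1).
  exists (fun k => k \in [:: 0; 1; 3%:R]) => -[l hl].
  by apply: (not_shift_reflection_triple p_gt5); exists l => k; rewrite -hl mulN1r.
by exists (fun k => k \in [:: 0; 1]); apply: not_shift_dilation_pair.
Qed.

End Sceneries.

Theorem theorem2 (R : realType) (n : nat) (gamma : 'Z_n -> R) :
  prime n -> (5 < n)%N ->
  is_prob_distr gamma ->
  (forall k : 'Z_n, exists q : rat, gamma k = ratr q) ->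
  reconstructive gamma ->
  forall x y : 'Z_n, fourier gamma x = fourier gamma y -> x = y.
Proof.
move: gamma; case: n => [|[|p]] gamma p_prime // p_gt5 _ gamma_rat gamma_rec x y.
have [q gammaE] : exists q : 'Z_p.+2 -> rat, gamma = (fun k => ratr (q k)).
  by have [q gammaE] := boolp.choice gamma_rat; exists q; apply: boolp.funext.
subst gamma => fourier_xy; have [// | xy] := eqVneq x y; exfalso.
have p_gt2 : (2 < p.+2)%N by apply: ltn_trans p_gt5.
have [m [m_unit m1 q_dil]] := fiber_mass_eq_dilation p_prime p_gt2 xy
  (fourier_eq_fiber_mass p_prime p_gt2 fourier_xy).
have [f f_not_shift] := exists_scenery_not_shift_dilation p_gt5 m_unit m1.
apply/f_not_shift/gamma_rec/(same_scenery_law_comp (mulrI m_unit) (mulrBr m)).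
by move=> k /=; rewrite q_dil.
Qed.
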